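(* For every connected graph $H$ with at least two vertices, $m(H)\ge 2^{\lfloor k'(H)/2\rfloor}$, where $k'(H)$ is the edge connectivity of $H$.
   Context: All graphs are finite and simple. The edge connectivity $k'(H)$ is the minimum number of edges whose removal disconnects $H$. For graphs $G_1=(V,E_1)$, $G_2=(V,E_2)$, their symmetric difference is $(V,E_1\oplus E_2)$, where $E_1\oplus E_2$ is the set of edges in exactly one of $E_1,E_2$. A connectivity code for $H=(V,E)$ is a collection of distinct spanning subgraphs $(V,E')$, $E'\subseteq E$, such that the symmetric difference of any two distinct members is a connected graph on $V$; $m(H)$ is the maximum cardinality of a connectivity code for $H$. *)

From mathcomp Require Import all_boot.
Set Implicit Arguments. Unset Strict Implicit. Unset Printing Implicit Defensive.

(* A finite simple graph on vertex type V is given by its edge set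
   E : {set {set V}}, every edge being a 2-element subset of V. *)
Definition simple_graph (V : finType) (E : {set {set V}}) : Prop :=
  forall e, e \in E -> #|e| = 2.

Definition adj (V : finType) (E : {set {set V}}) : rel V :=
  fun x y => (x != y) && ([set x; y] \in E).

Definition connectedb (V : finType) (E : {set {set V}}) : bool :=
  [forall x, forall y, connect (adj E) x y].

Definition edge_conn (V : finType) (E : {set {set V}}) : nat :=
  \big[minn/#|E|]_(S in powerset E | ~~ connectedb (E :\: S)) #|S|.

Definition symdiff (V : finType) (A B : {set {set V}}) : {set {set V}} :=
  (A :\: B) :|: (B :\: A).

(* connectivity code: a family of spanning subgraphs (edge subsets of E),
   distinct by construction as a set, whose pairwise symmetric differences
   are connected graphs on V *)
Definition conn_code (V : finType) (E : {set {set V}})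
    (C : {set {set {set V}}}) : bool :=
  [forall F in C, F \subset E] &&
  [forall F1 in C, forall F2 in C, (F1 != F2) ==> connectedb (symdiff F1 F2)].

Definition m_code (V : finType) (E : {set {set V}}) : nat :=
  \max_(C : {set {set {set V}}} | conn_code E C) #|C|.

From mathcomp Require Import all_boot all_order zify.
Set Implicit Arguments. Unset Strict Implicit. Unset Printing Implicit Defensive.

(* Put k = k'(H) / 2, so that 2k <= k'(H).  The heart of the proof is the
   Nash-Williams--Tutte tree packing theorem: E contains k pairwise disjoint
   edge sets F_1, ..., F_k each of which is a connected spanning subgraph.
   The 2^k unions U_S of the F_i over the subsets S of {1, ..., k} then form
   a connectivity code: if i lies in S but not in S', the symmetric
   difference of U_S and U_S' contains F_i, hence is connected.

   The packing theorem is
   then proved by the classical exchange argument: take k disjoint forests of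
   maximum total size, call an edge free when some family reachable by
   single-edge exchanges leaves it uncovered, and show that each forest,
   restricted to the free edges, has the components of the free edges.  If
   some forest were disconnected, there would be c >= 2 free components; each
   is separated from the rest by at least 2k crossing edges, whereas the
   forests can cover at most k * c - (k + 1) of them. *)

Lemma connect_propagate (T : finType) (r : rel T) (P : T -> Prop) a b :
  connect r a b -> P a -> (forall b c, P b -> r b c -> P c) -> P b.
Proof.
move=> /connectP[p path_p ->] Pa Pr.
elim: p a Pa path_p => [|c p IHp] a Pa //= /andP[rac path_p].
exact: IHp (Pr _ _ Pa rac) path_p.
Qed.

Lemma card_bigcup_le (I T : finType) (A : I -> {set T}) :
  #|\bigcup_i A i| <= \sum_i #|A i|.
Proof.
elim/big_rec2: _ => [|i n S _ IH]; first by rewrite cards0.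
by apply: leq_trans (leq_card_setU _ _) _; rewrite leq_add2l.
Qed.

Lemma double_count (I J : finType) (A : {set I}) (B : {set J}) (R : I -> J -> bool) :
  \sum_(i in A) #|[set j in B | R i j]| = \sum_(j in B) #|[set i in A | R i j]|.
Proof.
have card_sum (T : finType) (C : {set T}) (P : pred T) :
    #|[set t in C | P t]| = \sum_(t in C) P t.
  rewrite -sum1_card (eq_bigl (fun t => (t \in C) && P t)) => [|t]; last by rewrite inE.
  by rewrite big_mkcondr; apply: eq_bigr => t _; case: (P t).
rewrite (eq_bigr _ (fun i _ => card_sum _ _ _)) exchange_big.
by apply: eq_bigr => j _; rewrite card_sum.
Qed.

Section Linked.
Variable V : finType.
Implicit Types (B F H K : {set {set V}}) (e : {set V}) (x y a b c : V).

Definition linked H : rel V := connect (adj H).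

Lemma adj_sym H : symmetric (adj H).
Proof. by move=> x y; rewrite /adj eq_sym setUC. Qed.

Lemma linked_sym H x y : linked H x y = linked H y x.
Proof. exact: (sym_connect_sym (adj_sym H)). Qed.

Lemma linked_edge H x y : x != y -> [set x; y] \in H -> linked H x y.
Proof. by move=> nxy xyH; apply: connect1; rewrite /adj nxy. Qed.

Lemma linked_sub H K x y : H \subset K -> linked H x y -> linked K x y.
Proof.
move=> sHK; apply: connect_sub => a b /andP[nab abH].
by apply: linked_edge; rewrite // (subsetP sHK).
Qed.

Lemma connectedb_sub H K : H \subset K -> connectedb H -> connectedb K.
Proof.
move=> sHK /forallP cH; apply/forallP=> x; apply/forallP=> y.
by move/forallP/(_ y): (cH x); apply: linked_sub.
Qed.

Lemma set2_inv x y b c : b != c -> [set b; c] = [set x; y] ->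
  (b = x /\ c = y) \/ (b = y /\ c = x).
Proof.
move=> nbc bcE.
have : b \in [set x; y] by rewrite -bcE !inE eqxx.
have : c \in [set x; y] by rewrite -bcE !inE eqxx orbT.
move: nbc; rewrite !inE => nbc /orP[]/eqP cE /orP[]/eqP bE;
  by move: nbc; rewrite cE bE ?eqxx; auto.
Qed.

Lemma linked_setU1 K x y a b : linked ([set x; y] |: K) a b ->
  [\/ linked K a b, linked K a x /\ linked K y b | linked K a y /\ linked K x b].
Proof.
move=> lab; apply: (connect_propagate (P := fun b =>
  [\/ linked K a b, linked K a x /\ linked K y b | linked K a y /\ linked K x b])
  lab) => [|b' c IH]; first exact/Or31/connect0.
rewrite /adj in_setU1 => /andP[nbc /orP[/eqP bcE|bcK]]; last first.
  have lbc : linked K b' c by apply: linked_edge.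
  case: IH => [lab'|[l1 l2]|[l1 l2]].
  - exact/Or31/(connect_trans lab').
  - exact/Or32/(conj l1)/(connect_trans l2).
  - exact/Or33/(conj l1)/(connect_trans l2).
case: (set2_inv nbc bcE) => -[-> ->] in IH *.
  case: IH => [lab'|[l1 l2]|[l1 l2]]; first exact/Or32/(conj lab')/connect0.
    exact/Or32/(conj l1)/connect0.
  exact/Or31.
case: IH => [lab'|[l1 l2]|[l1 l2]]; first exact/Or33/(conj lab')/connect0.
  exact/Or31.
exact/Or33/(conj l1)/connect0.
Qed.

Lemma linked_swap K x y a b : linked ([set x; y] |: K) a b -> ~~ linked K a b ->
  linked ([set a; b] |: K) x y.
Proof.
move=> lab nlab; have nab : a != b by apply: contraNneq nlab => ->; apply: connect0.
have sK : K \subset [set a; b] |: K := subsetUr _ _.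
have ab_new : linked ([set a; b] |: K) a b by apply: linked_edge; rewrite // setU11.
case/linked_setU1: lab => [l|[lax lyb]|[lay lxb]]; first by rewrite l in nlab.
  rewrite linked_sym in lax; rewrite linked_sym in lyb.
  exact: connect_trans (linked_sub sK lax) (connect_trans ab_new (linked_sub sK lyb)).
rewrite linked_sym in ab_new.
exact: connect_trans (linked_sub sK lxb) (connect_trans ab_new (linked_sub sK lay)).
Qed.

Lemma linked_setU1_sub K K' x y a b : K \subset K' -> linked K' x y ->
  linked ([set x; y] |: K) a b -> linked K' a b.
Proof.
move=> sKK' lxy; have lyx : linked K' y x by rewrite linked_sym.
apply: connect_sub => c d /andP[ncd]; rewrite in_setU1 => /orP[/eqP cdE|cdK].
  by case: (set2_inv ncd cdE) => -[-> ->].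
by apply: linked_edge; rewrite // (subsetP sKK').
Qed.

Lemma simple_edgeP H e : simple_graph H -> e \in H ->
  exists x y, x != y /\ e = [set x; y].
Proof. by move=> sH /sH /eqP /cards2P. Qed.

Lemma simple_graph_sub H K : H \subset K -> simple_graph K -> simple_graph H.
Proof. by move=> sHK sK e /(subsetP sHK) /sK. Qed.

Definition forest H : bool :=
  [forall e in H, forall x, forall y,
     ((e == [set x; y]) && (x != y)) ==> ~~ linked (H :\ e) x y].

Lemma forestP H : reflect
  (forall e x y, e \in H -> e = [set x; y] -> x != y -> ~~ linked (H :\ e) x y)
  (forest H).
Proof.
apply: (iffP forall_inP) => [fH e x y eH eE nxy | fH e eH].
  by move/forallP/(_ x)/forallP/(_ y): (fH e eH); rewrite eE eqxx nxy.
apply/forallP=> x; apply/forallP=> y; apply/implyP=> /andP[/eqP eE nxy].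
exact: fH.
Qed.

Lemma forest_sub H K : K \subset H -> forest H -> forest K.
Proof.
move=> sKH /forestP fH; apply/forestP => e x y eK eE nxy; apply/negP=> lxy.
have := fH e x y (subsetP sKH _ eK) eE nxy; rewrite (linked_sub _ lxy) //.
exact: setSD.
Qed.

Lemma forest_setU1 H x y : forest H -> x != y -> ~~ linked H x y ->
  forest ([set x; y] |: H).
Proof.
move=> /forestP fH nxy nlxy.
have xyH : [set x; y] \notin H by apply: contra nlxy; apply: linked_edge.
apply/forestP => e a b; rewrite in_setU1 => /orP[/eqP -> | eH] eE nab.
  rewrite setU1K //; have [[-> ->]|[-> ->]] := set2_inv nab (esym eE) => //.
  by rewrite linked_sym.
have -> : ([set x; y] |: H) :\ e = [set x; y] |: (H :\ e).
  apply/setP=> g; rewrite !inE; case: (eqVneq g [set x; y]) => //= ->.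
  by rewrite andbT; apply: contraNneq xyH => ->.
apply/negP => /linked_swap/(_ (fH e a b eH eE nab)); rewrite -eE setD1K // => lxy.
by rewrite lxy in nlxy.
Qed.

Lemma forest_bridge H B x y : forest H -> simple_graph H -> B \subset H ->
  linked H x y -> ~~ linked (H :\: B) x y -> exists2 f, f \in B & ~~ linked (H :\ f) x y.
Proof.
move=> /forestP fH sH; have [n] := ubnP #|B|; elim: n B => // n IH B szB sBH lxy nlxy.
have [f fB] : exists f, f \in B.
  by apply/set0Pn; apply: contraNneq nlxy => ->; rewrite setD0.
have fH' : f \in H := subsetP sBH f fB.
have [lxy'|nlxy'] := boolP (linked (H :\: (B :\ f)) x y); last first.
  have szB' : #|B :\ f| < n by rewrite (cardsD1 f B) fB in szB.
  have [f' /setD1P[_ f'B] nlf'] := IH _ szB' (subset_trans (subsetDl _ _) sBH) lxy nlxy'.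
  by exists f'.
exists f => //; have [u [v [nuv fE]]] := simple_edgeP sH fH'.
have HB_f : H :\: (B :\ f) = [set u; v] |: (H :\: B).
  by apply/setP=> g; rewrite !inE -fE; case: (eqVneq g f) => [->|].
have sHB : H :\: B \subset H :\ f by apply: setDS; rewrite sub1set.
rewrite HB_f in lxy'; apply/negP => lxy_f.
have := linked_setU1_sub sHB lxy_f (linked_swap lxy' nlxy).
by apply/negP; apply: fH.
Qed.

Definition comp H x : {set V} := [set y | linked H x y].
Definition components H : {set {set V}} := [set comp H x | x in [set: V]].
Definition ncomp H : nat := #|components H|.

Lemma comp_eq H x y : linked H x y -> comp H x = comp H y.
Proof.
move=> lxy; apply/setP=> z; rewrite !inE; apply/idP/idP; last exact: connect_trans.
by rewrite linked_sym in lxy; apply: connect_trans.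
Qed.

Lemma mem_comp H x : x \in comp H x.
Proof. by rewrite inE; apply: connect0. Qed.

Lemma ncomp_gt0 H x : 0 < ncomp H.
Proof. by rewrite card_gt0; apply/set0Pn; exists (comp H x); rewrite imset_f. Qed.

Lemma ncomp_gt1 H x y : ~~ linked H x y -> 1 < ncomp H.
Proof.
move=> nlxy; apply/card_gt1P; exists (comp H x), (comp H y).
rewrite !imset_f //; split=> //; apply: contraNneq nlxy => cxy.
by have := mem_comp H y; rewrite -cxy inE.
Qed.

Lemma ncomp_eq H K : linked H =2 linked K -> ncomp H = ncomp K.
Proof.
move=> eHK; rewrite /ncomp /components (eq_imset _ (_ : comp H =1 comp K)) // => x.
by apply/setP=> z; rewrite !inE eHK.
Qed.

Lemma ncomp_merge H K a b : subrel (linked H) (linked K) ->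
  linked K a b -> ~~ linked H a b -> ncomp K < ncomp H.
Proof.
move=> sHK lab nlab.
pose merge (X : {set V}) := \bigcup_(z in X) comp K z.
have mergeE x : merge (comp H x) = comp K x.
  apply/setP=> z; apply/bigcupP/idP => [[w]|lxz]; first by rewrite inE => /sHK/comp_eq ->.
  by exists x; rewrite ?mem_comp.
rewrite /ncomp; have -> : components K = merge @: components H.
  by rewrite -imset_comp; apply: eq_imset => x /=; rewrite mergeE.
rewrite ltn_neqAle leq_imset_card andbT; apply/negP => /imset_injP inj.
have cab : comp H a = comp H b by apply: inj; rewrite ?imset_f ?mergeE ?(comp_eq lab).
by move/negP: nlab; apply; have := mem_comp H b; rewrite -cab inE.
Qed.

Lemma forest_ncomp F (F' : {set {set V}}) : forest F -> simple_graph F -> F' \subset F ->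
  #|F :\: F'| + ncomp F <= ncomp F'.
Proof.
move=> /forestP fF sF; have [n] := ubnP #|F :\: F'|.
elim: n F' => // n IH F' szD sF'F.
have [D0|[g gD]] := set_0Vmem (F :\: F').
  have -> : F' = F by apply/eqP; rewrite eqEsubset sF'F /= -setD_eq0 D0.
  by rewrite setDv cards0.
move: (gD); rewrite inE => /andP[gF' gF].
have eqD : F :\: (g |: F') = (F :\: F') :\ g.
  by apply/setP=> z; rewrite !inE; case: (z == g).
have szD' : #|F :\: (g |: F')| < n by rewrite eqD; rewrite (cardsD1 g) gD in szD.
have := IH _ szD'; rewrite subUset sub1set gF sF'F eqD => /(_ isT) IHg.
have [a [b [nab gE]]] := simple_edgeP sF gF.
have lt : ncomp (g |: F') < ncomp F'.
  apply: (@ncomp_merge F' (g |: F') a b).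
  - by move=> u v; apply: linked_sub; apply: subsetUr.
  - by apply: linked_edge; rewrite // -gE setU11.
  apply: contra (fF g a b gF gE nab); apply: linked_sub.
  apply/subsetP=> z zF'; rewrite !inE (subsetP sF'F _ zF') andbT.
  by apply: contraNneq gF' => <-.
by rewrite (cardsD1 g) gD; move: IHg lt; rewrite add1n; lia.
Qed.

Lemma linked_exchange H f x y : f \in H -> linked H x y -> ~~ linked (H :\ f) x y ->
  linked ([set x; y] |: (H :\ f)) =2 linked H.
Proof.
move=> fH lxy nlxy u v; apply/idP/idP => [luv|].
  exact: linked_setU1_sub (subsetDl _ _) lxy luv.
apply: connect_sub => c d /andP[ncd cdH].
case: (eqVneq [set c; d] f) => [cdf | nf]; last first.
  by apply: linked_edge; rewrite // !inE nf cdH orbT.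
by apply: linked_swap nlxy; rewrite cdf setD1K.
Qed.

End Linked.

Lemma edge_conn_le (V : finType) (E S : {set {set V}}) :
  S \subset E -> ~~ connectedb (E :\: S) -> edge_conn E <= #|S|.
Proof.
move=> sSE nc; rewrite /edge_conn -minEnat.
by apply: (@Order.TotalTheory.bigmin_le_cond _ nat _ _ S); rewrite powersetE sSE.
Qed.

Section Packing.
Variables (V : finType) (E : {set {set V}}) (k : nat).
Hypothesis simpleE : simple_graph E.

Local Notation family := {ffun 'I_k -> {set {set V}}}.
Implicit Types (F G : family) (S : {set {set V}}) (x y a b : V) (e f : {set V}).
Implicit Types (i j : 'I_k).

Definition packing F : bool :=
  [forall i, (F i \subset E) && forest (F i)] &&
  [forall e, forall i, forall j, ((e \in F i) && (e \in F j)) ==> (i == j)].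

Lemma packingP F : reflect
  [/\ forall i, F i \subset E, forall i, forest (F i)
    & forall e i j, e \in F i -> e \in F j -> i = j] (packing F).
Proof.
apply: (iffP andP) => [[/forallP sub_forest /forallP disj]|[sFE fF disj]].
  split=> [i|i|e i j ei ej]; first by case/andP: (sub_forest i).
    by case/andP: (sub_forest i).
  by move/forallP/(_ i)/forallP/(_ j): (disj e); rewrite ei ej => /eqP.
split; first by apply/forallP=> i; rewrite sFE fF.
apply/forallP=> e; apply/forallP=> i; apply/forallP=> j.
by apply/implyP=> /andP[ei ej]; rewrite (disj e i j).
Qed.

Definition weight F : nat := \sum_i #|F i|.
Definition uncovered F e : bool := [forall i, e \notin F i].
Definition update F i S : family := [ffun j => if j == i then S else F j].

Lemma weight_update F i S : weight (update F i S) + #|F i| = weight F + #|S|.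
Proof.
rewrite /weight (bigD1 i) //= [X in _ = X + _](bigD1 i) //= ffunE eqxx.
rewrite (eq_bigr (fun j => #|F j|)) => [|j nji]; last by rewrite ffunE (negbTE nji).
by move: (\sum_(j | j != i) _) => s; lia.
Qed.

Lemma packing_update F i S : packing F -> S \subset E -> forest S ->
  (forall e j, j != i -> e \in S -> e \notin F j) -> packing (update F i S).
Proof.
move=> /packingP[sFE fF disj] sSE fS disjS; apply/packingP.
split=> [j|j|e j j']; rewrite ?ffunE; try by case: (j == i).
case: (eqVneq j i) => [->|nji]; case: (eqVneq j' i) => [->|nj'i] //.
- by move=> eS ej'; move: (disjS e j' nj'i eS); rewrite ej'.
- by move=> ej eS; move: (disjS e j nji eS); rewrite ej.
- exact: disj.
Qed.

(* The elementary exchange: add an uncovered edge xy of E to the i-th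
   forest and delete an edge f of it lying on the cycle thus created. *)
Definition exchange F F' : bool := [exists i, exists x, exists y, exists f,
  [&& adj E x y, uncovered F [set x; y], f \in F i, ~~ linked (F i :\ f) x y
    & F' == update F i ([set x; y] |: (F i :\ f))]].

Lemma exchangeP F F' : reflect
  (exists i x y f, [/\ adj E x y, uncovered F [set x; y], f \in F i,
     ~~ linked (F i :\ f) x y & F' = update F i ([set x; y] |: (F i :\ f))])
  (exchange F F').
Proof.
apply: (iffP existsP) => [[i /existsP[x /existsP[y /existsP[f]]]]|[i [x [y [f]]]]].
  by case/and5P=> ? ? ? ? /eqP ?; exists i, x, y, f.
case=> xyE un fi nl ->; exists i; apply/existsP; exists x; apply/existsP; exists y.
by apply/existsP; exists f; rewrite xyE un fi nl eqxx.
Qed.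

Lemma exchange_packing F F' : packing F -> exchange F F' ->
  packing F' /\ weight F' = weight F.
Proof.
move=> pF /exchangeP[i [x [y [f [/andP[nxy xyE] /forallP un fi nl ->]]]]].
have /packingP[sFE fF disj] := pF.
have xyF : [set x; y] \notin F i :\ f by rewrite inE negb_and un orbT.
split.
  apply: packing_update => //.
  - by rewrite subUset sub1set xyE (subset_trans (subsetDl _ _) (sFE i)).
  - exact/forest_setU1/nl/nxy/(forest_sub (subsetDl _ _) (fF i)).
  move=> e j nji; rewrite in_setU1 => /orP[/eqP ->|/setD1P[_ ei]]; first exact: un.
  by apply: contra nji => ej; rewrite (disj e j i).
have := weight_update F i ([set x; y] |: (F i :\ f)).
by rewrite cardsU1 xyF (cardsD1 f (F i)) fi => /addIn.
Qed.

Definition empty_family : family := [ffun _ => set0].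

Lemma packing_empty : packing empty_family.
Proof.
apply/packingP; split=> [i|i|e i j]; rewrite ffunE ?inE ?sub0set //.
by apply/forestP => e x y; rewrite inE.
Qed.

Definition Fmax : family := [arg max_(F > empty_family | packing F) weight F].

Lemma FmaxP : packing Fmax /\ forall F, packing F -> weight F <= weight Fmax.
Proof. by rewrite /Fmax; case: arg_maxnP => [|F pF maxF]; [exact: packing_empty|]. Qed.

Definition reachable F : bool := connect exchange Fmax F.

Lemma reachable_exchange F F' : reachable F -> exchange F F' -> reachable F'.
Proof. by move=> rF xF; apply: connect_trans rF (connect1 xF). Qed.

Lemma reachable_max F : reachable F ->
  packing F /\ forall G, packing G -> weight G <= weight F.
Proof.
move=> rF; have [pFmax maxFmax] := FmaxP.
suff [pF ->] : packing F /\ weight F = weight Fmax by [].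
apply: (connect_propagate (P := fun F => packing F /\ weight F = weight Fmax) rF) => //.
by move=> G G' [pG wG] /(exchange_packing pG)[pG' ->].
Qed.

(* In a maximum packing, the ends of an uncovered edge of E are linked in
   every member: otherwise the edge could be added to it. *)
Lemma max_packing_linked F i x y : packing F ->
  (forall G, packing G -> weight G <= weight F) ->
  [set x; y] \in E -> x != y -> uncovered F [set x; y] -> linked (F i) x y.
Proof.
move=> pF maxF xyE nxy /forallP un; apply/negPn/negP => nl.
have /packingP[sFE fF disj] := pF.
have pG : packing (update F i ([set x; y] |: F i)).
  apply: packing_update => //; first by rewrite subUset sub1set xyE sFE.
    exact: forest_setU1.
  move=> e j nji; rewrite in_setU1 => /orP[/eqP ->|ei]; first exact: un.
  by apply: contra nji => ej; rewrite (disj e j i).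
have := maxF _ pG; have := weight_update F i ([set x; y] |: F i).
rewrite cardsU1 (negbTE (un i)); lia.
Qed.

(* The free edges: edges of E left uncovered by some packing reachable
   from Fmax.  The definition is locked so that membership is only ever
   unfolded through [EfreeE]. *)
Fact Efree_key : unit. Proof. by []. Qed.
Definition Efree : {set {set V}} :=
  locked_with Efree_key [set e in E | [exists F, reachable F && uncovered F e]].

Lemma EfreeE e : (e \in Efree) = (e \in E) && [exists F, reachable F && uncovered F e].
Proof. by rewrite /Efree locked_withE inE. Qed.

Lemma EfreeI F e : reachable F -> e \in E -> uncovered F e -> e \in Efree.
Proof. by move=> rF eE un; rewrite EfreeE eE; apply/existsP; exists F; rewrite rF. Qed.

(* The edge f removed by an exchange is uncovered afterwards, hence free. *)
Lemma exchange_removed_free F i x y f : reachable F -> [set x; y] \in E ->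
  uncovered F [set x; y] -> f \in F i -> ~~ linked (F i :\ f) x y ->
  f \in Efree.
Proof.
move=> rF xyE /forallP un fi nl.
have [/packingP[sFE _ disj] _] := reachable_max rF.
have nxy : x != y by apply: contraNneq nl => ->; apply: connect0.
apply: (@EfreeI (update F i ([set x; y] |: (F i :\ f)))); last 2 first.
- exact: (subsetP (sFE i)).
- apply/forallP=> j; rewrite ffunE; case: (eqVneq j i) => [_|nji].
    rewrite !inE eqxx /= orbF; apply: contraTneq fi => ->.
    by rewrite (negbTE (un i)).
  by apply: contra nji => fj; rewrite (disj f j i).
apply: reachable_exchange rF _; apply/exchangeP; exists i, x, y, f.
by split=> //; [rewrite /adj nxy xyE | apply/forallP].
Qed.

(* For a reachable F, the ends of an uncovered edge are linked in every
   F i restricted to free edges: by [forest_bridge] a non-free edge on the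
   path could otherwise be exchanged against xy, making it free. *)
Lemma uncovered_linked_free F i x y : reachable F -> [set x; y] \in E -> x != y ->
  uncovered F [set x; y] -> linked (F i :&: Efree) x y.
Proof.
move=> rF xyE nxy un; have [pF maxF] := reachable_max rF.
have /packingP[sFE fF _] := pF.
have lxy := max_packing_linked i pF maxF xyE nxy un.
apply/negPn/negP => nl.
have nl' : ~~ linked (F i :\: (F i :\: Efree)) x y by rewrite setDDr setDv set0U.
have [f /setDP[fi fnE] nlf] :=
  forest_bridge (fF i) (simple_graph_sub (sFE i) simpleE) (subsetDl _ _) lxy nl'.
by rewrite (exchange_removed_free rF xyE un fi nlf) in fnE.
Qed.

Lemma exchange_linked_free F F' : reachable F -> exchange F F' ->
  forall j, linked (F' j :&: Efree) =2 linked (F j :&: Efree).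
Proof.
move=> rF /exchangeP[i [x [y [f [/andP[nxy xyE] un fi nl ->]]]]] j.
rewrite ffunE; case: (eqVneq j i) => [-> | //].
have xy_free : [set x; y] \in Efree := EfreeI rF xyE un.
have f_free : f \in Efree := exchange_removed_free rF xyE un fi nl.
have -> : ([set x; y] |: F i :\ f) :&: Efree = [set x; y] |: ((F i :&: Efree) :\ f).
  apply/setP=> g; rewrite !inE; case: (eqVneq g [set x; y]) => [->|_] /=.
    exact: xy_free.
  by rewrite andbA.
apply: linked_exchange.
- by rewrite inE fi f_free.
- exact: uncovered_linked_free.
- by apply: contra nl; apply: linked_sub; apply: setSD; apply: subsetIl.
Qed.

Lemma reachable_linked_free F : reachable F ->
  forall j, linked (F j :&: Efree) =2 linked (Fmax j :&: Efree).
Proof.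
move=> rF j.
suff [] : reachable F /\ linked (F j :&: Efree) =2 linked (Fmax j :&: Efree) by [].
apply: (connect_propagate (P := fun F =>
  reachable F /\ linked (F j :&: Efree) =2 linked (Fmax j :&: Efree)) rF).
- by split=> //; apply: connect0.
- move=> G G' [rG eG] xG; split; first exact: reachable_exchange xG.
  by move=> u v; rewrite (exchange_linked_free rG xG) eG.
Qed.

Lemma linked_free j : linked Efree =2 linked (Fmax j :&: Efree).
Proof.
move=> u v; apply/idP/idP; last exact/linked_sub/subsetIr.
apply: connect_sub => a b /andP[nab].
rewrite EfreeE => /andP[abE /existsP[F /andP[rF un]]].
by have := uncovered_linked_free j rF abE nab un; rewrite (reachable_linked_free rF).
Qed.

Definition cross : {set {set V}} :=
  [set g in E | [exists a, exists b, (g == [set a; b]) && ~~ linked Efree a b]].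

Lemma cross_covered g : g \in cross -> exists2 i, g \in Fmax i & g \notin Efree.
Proof.
rewrite inE => /andP[gE /existsP[a /existsP[b /andP[/eqP gab nl]]]].
have nab : a != b by apply: contraNneq nl => ->; apply: connect0.
have g_nfree : g \notin Efree by apply: contra nl => gF; apply: linked_edge; rewrite -?gab.
have : ~~ uncovered Fmax g by apply: contra g_nfree; apply: EfreeI (connect0 _ _) gE.
by rewrite negb_forall => /existsP[i]; rewrite negbK => gi; exists i.
Qed.

Lemma nonfree_bound i : #|Fmax i :\: Efree| + ncomp (Fmax i) <= ncomp Efree.
Proof.
have [/packingP[sFE fF _] _] := FmaxP.
have -> : Fmax i :\: Efree = Fmax i :\: (Fmax i :&: Efree) by rewrite setDIr setDv set0U.
rewrite (ncomp_eq (linked_free i)).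
exact: forest_ncomp (fF i) (simple_graph_sub (sFE i) simpleE) (subsetIl _ _).
Qed.

Lemma card_cross_le i0 x0 y0 : ~~ linked (Fmax i0) x0 y0 ->
  #|cross| + k.+1 <= k * ncomp Efree.
Proof.
move=> nl0.
have cross_sub : #|cross| <= \sum_i #|Fmax i :\: Efree|.
  apply: leq_trans (card_bigcup_le (fun i => Fmax i :\: Efree)).
  apply/subset_leq_card/subsetP => g /cross_covered[i gi g_nfree].
  by apply/bigcupP; exists i; rewrite // inE g_nfree.
have comps_sum : k.+1 <= \sum_i ncomp (Fmax i).
  rewrite (bigD1 i0) //=.
  have others : \sum_(i < k | i != i0) 1 <= \sum_(i < k | i != i0) ncomp (Fmax i).
    by apply: leq_sum => i _; apply: ncomp_gt0 x0.
  rewrite sum1_card cardC1 card_ord in others.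
  have k_gt0 : 0 < k := leq_ltn_trans (leq0n i0) (ltn_ord i0).
  by apply: leq_trans (leq_add (ncomp_gt1 nl0) others); rewrite add2n prednK.
have sum_bound : \sum_i (#|Fmax i :\: Efree| + ncomp (Fmax i)) <= \sum_(i < k) ncomp Efree.
  by apply: leq_sum => i _; apply: nonfree_bound.
rewrite big_split sum_nat_const card_ord /= in sum_bound.
exact: leq_trans (leq_add cross_sub comps_sum) sum_bound.
Qed.

Definition boundary (X : {set V}) : {set {set V}} :=
  [set g in cross | [exists z, (z \in X) && (z \in g)]].

(* Deleting the boundary of a free component X disconnects E, so it has at
   least edge_conn E edges (as soon as there is another component). *)
Lemma edge_conn_le_boundary X : X \in components Efree -> 1 < ncomp Efree ->
  edge_conn E <= #|boundary X|.
Proof.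
move=> /imsetP[x _ ->] gt1; apply: edge_conn_le.
  by apply/subsetP => g; rewrite !inE => /andP[/andP[]].
have [y nlxy] : exists y, ~~ linked Efree x y.
  apply/existsP; apply: contraLR gt1; rewrite negb_exists -leqNgt => /forallP lx.
  rewrite -(cards1 (comp Efree x)); apply: subset_leq_card.
  apply/subsetP => Y /imsetP[z _ ->]; rewrite inE; apply/eqP/esym/comp_eq.
  by have := lx z; rewrite negbK.
apply/negP => /forallP/(_ x)/forallP/(_ y) lxy; move/negP: nlxy; apply.
suff : y \in comp Efree x by rewrite inE.
apply: (connect_propagate (P := fun z => z \in comp Efree x) lxy) => [|z w zX].
  exact: mem_comp.
rewrite /adj !inE => /and3P[nzw /negP zw_nbd zwE]; apply/negPn/negP => wX.
apply: zw_nbd; rewrite zwE /=; apply/andP; split.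
  apply/existsP; exists z; apply/existsP; exists w; rewrite eqxx /=.
  by apply: contra wX; apply: connect_trans; rewrite inE in zX.
by apply/existsP; exists z; rewrite zX !inE eqxx.
Qed.

(* A crossing edge lies on the boundary of at most two components, so
   summing the boundaries counts each crossing edge at most twice. *)
Lemma sum_boundary_le : \sum_(X in components Efree) #|boundary X| <= (#|cross|).*2.
Proof.
have -> : \sum_(X in components Efree) #|boundary X| =
    \sum_(X in components Efree) #|[set g in cross | g \in boundary X]|.
  apply: eq_bigr => X _; apply: eq_card => g.
  by rewrite [RHS]inE andb_idl // => /setIdP[].
rewrite double_count -muln2 -sum_nat_const; apply: leq_sum => g.
rewrite inE => /andP[gE /existsP[a /existsP[b /andP[/eqP gab _]]]].
apply: leq_trans (subset_leq_card (_ : _ \subset [set comp Efree a; comp Efree b])) _.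
  apply/subsetP => X; rewrite !inE => /andP[/imsetP[z _ ->] /andP[_]].
  case/existsP=> w /andP[]; rewrite inE => lzw; rewrite gab !inE.
  by case/orP=> /eqP wE; rewrite (comp_eq lzw) wE eqxx ?orbT.
by rewrite cards2; case: (_ != _).
Qed.

(* The main counting argument: if a member of Fmax were disconnected, the
   boundaries of the free components (there would be at least two) would
   contain at least k * ncomp Efree crossing edges counted twice, more than
   [card_cross_le] allows. *)
Lemma Fmax_connected : k.*2 <= edge_conn E -> forall i, connectedb (Fmax i).
Proof.
move=> kE i0; apply/forallP => x0; apply/forallP => y0; apply/negPn/negP => nl0.
have cross_le := card_cross_le nl0.
have [le1|gt1] := leqP (ncomp Efree) 1.
  have : k * ncomp Efree <= k * 1 by rewrite leq_mul2l le1 orbT.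
  lia.
have : (k * ncomp Efree).*2 <= (#|cross|).*2.
  apply: leq_trans sum_boundary_le; rewrite -mul2n mulnA mul2n mulnC -sum_nat_const.
  by apply: leq_sum => X XE; apply: leq_trans kE (edge_conn_le_boundary XE gt1).
rewrite leq_double; lia.
Qed.

End Packing.

Theorem disjoint_connected_subgraphs (V : finType) (E : {set {set V}}) k :
  simple_graph E -> k.*2 <= edge_conn E ->
  exists F : 'I_k -> {set {set V}}, [/\ forall i, F i \subset E,
    forall i, connectedb (F i) & forall e i j, e \in F i -> e \in F j -> i = j].
Proof.
move=> sE kE; have [/packingP[sFE _ disj] _] := FmaxP E k.
by exists (Fmax E k); split=> //; apply: Fmax_connected.
Qed.

Lemma connected_nonempty (V : finType) (H : {set {set V}}) :
  1 < #|V| -> connectedb H -> H != set0.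
Proof.
case/card_gt1P => x [y [_ _ nxy]] /forallP/(_ x)/forallP/(_ y) lxy.
apply: contraNneq nxy => H0; move: lxy; rewrite H0.
by case/connectP => -[|z p] /=; [move=> _ -> | rewrite /adj inE andbF].
Qed.

Section Code.
Variables (V : finType) (E : {set {set V}}) (k : nat) (F : 'I_k -> {set {set V}}).
Hypotheses (sFE : forall i, F i \subset E) (connF : forall i, connectedb (F i)).
Hypotheses (neF : forall i, F i != set0)
  (disjF : forall e i j, e \in F i -> e \in F j -> i = j).
Implicit Types (S : {set 'I_k}) (i j : 'I_k).

Definition union_of S : {set {set V}} := \bigcup_(i in S) F i.

(* Since the members are nonempty and disjoint, a union determines its
   index set. *)
Lemma union_of_subset S (S' : {set 'I_k}) : union_of S \subset union_of S' -> S \subset S'.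
Proof.
move=> sU; apply/subsetP => i iS; have /set0Pn[e ei] := neF i.
have /bigcupP[j jS' ej] : e \in union_of S' by apply: (subsetP sU); apply/bigcupP; exists i.
by rewrite (disjF ei ej).
Qed.

(* If i is in S but not in S', then F i lies inside the symmetric
   difference of the unions, which is therefore connected. *)
Lemma symdiff_union_connected S (S' : {set 'I_k}) i : i \in S -> i \notin S' ->
  connectedb (symdiff (union_of S) (union_of S')).
Proof.
move=> iS niS'; apply: connectedb_sub (connF i); apply/subsetP => e ei.
rewrite !inE; apply/orP; left; apply/andP; split; last by apply/bigcupP; exists i.
by apply/bigcupP => -[j jS' ej]; move: niS'; rewrite (disjF ei ej) jS'.
Qed.

Lemma union_code : conn_code E [set union_of S | S in powerset [set: 'I_k]].
Proof.
apply/andP; split.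
  by apply/forall_inP => _ /imsetP[S _ ->]; apply/bigcupsP => i _; apply: sFE.
apply/forall_inP => _ /imsetP[S _ ->]; apply/forall_inP => _ /imsetP[S' _ ->].
apply/implyP => nU; have [sSS'|/subsetPn[i iS niS']] := boolP (S \subset S').
  have /subsetPn[i iS' niS] : ~~ (S' \subset S).
    apply: contraNN nU => sS'S.
    by rewrite (_ : S = S') //; apply/eqP; rewrite eqEsubset sSS'.
  by rewrite /symdiff setUC; apply: symdiff_union_connected iS' niS.
exact: symdiff_union_connected iS niS'.
Qed.

Lemma code_of_disjoint_connected : 2 ^ k <= m_code E.
Proof.
have card_code : #|[set union_of S | S in powerset [set: 'I_k]]| = 2 ^ k.
  rewrite card_in_imset ?card_powerset ?cardsT ?card_ord // => S S' _ _ eU.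
  by apply/eqP; rewrite eqEsubset !union_of_subset // eU.
rewrite -card_code.
exact: (@leq_bigmax_cond _ (conn_code E) (fun C => #|C|) _ union_code).
Qed.

End Code.

Theorem mainTheorem10 (V : finType) (E : {set {set V}}) :
  simple_graph E -> 2 <= #|V| -> connectedb E ->
  2 ^ (edge_conn E)./2 <= m_code E.
Proof.
move=> sE V_gt1 _; set k := (edge_conn E)./2.
have kE : k.*2 <= edge_conn E by rewrite -[X in _ <= X]odd_double_half leq_addl.
have [F [sFE connF disjF]] := disjoint_connected_subgraphs sE kE.
apply: (code_of_disjoint_connected sFE connF _ disjF) => i.
exact: connected_nonempty V_gt1 (connF i).
Qed.
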